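(* Let $\mathcal{R}=(K,\varphi)$ be a rational set of regular languages, with $K\subseteq\Delta^+$ regular and $\varphi:\Delta\to2^{\Sigma^*}$ a regular language substitution such that $\varepsilon\in\varphi(\delta)$ for all $\delta\in\Delta$. Then the set $S(\mathcal{R})=\bigcup_{L\in\mathcal{R}}S(L)$ is finite.
   Context: A regular language substitution is a map $\varphi:\Delta\to2^{\Sigma^*}$ ($\Delta,\Sigma$ alphabets) with each $\varphi(\delta)$ regular, extended to words by $\varphi(\delta\cdot w)=\varphi(\delta)\cdot\varphi(w)$. $(K,\varphi)$ denotes the set $\{\varphi(w)\mid w\in K\}$; such sets with $K\subseteq\Delta^+$ regular are called rational sets of regular languages. For $L\subseteq\Sigma^*$, $S(L)=\{w\in L\setminus\{\varepsilon\}\mid \text{no } w'\in L\setminus\{\varepsilon\} \text{ has } |w'|<|w|\}$. *)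

From mathcomp Require Import all_boot.
Set Implicit Arguments. Unset Strict Implicit. Unset Printing Implicit Defensive.

Definition lang (A : Type) := seq A -> Prop.

Section Lang.
Variable A : Type.

Definition eps_lang : lang A := fun w => w = [::].

Definition conc (L1 L2 : lang A) : lang A :=
  fun w => exists u v, w = u ++ v /\ L1 u /\ L2 v.

Inductive star (L : lang A) : lang A :=
| star_nil : star L [::]
| star_app u v : L u -> star L v -> star L (u ++ v).

Inductive regex :=
| RVoid | REps | RAtom of A | RAlt of regex & regex
| RCat of regex & regex | RStar of regex.

Fixpoint lang_of (r : regex) : lang A :=
  match r with
  | RVoid => fun _ => False
  | REps => eps_lang
  | RAtom a => fun w => w = [:: a]
  | RAlt r1 r2 => fun w => lang_of r1 w \/ lang_of r2 w
  | RCat r1 r2 => conc (lang_of r1) (lang_of r2)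
  | RStar r1 => star (lang_of r1)
  end.

Definition regular (L : lang A) : Prop :=
  exists r : regex, forall w, L w <-> lang_of r w.

Definition Smin (L : lang A) : lang A :=
  fun w => L w /\ w <> [::] /\
    forall w', L w' -> w' <> [::] -> ~ (size w' < size w)%N.
End Lang.

Definition subst_word (D S : Type) (phi : D -> lang S) (w : seq D) : lang S :=
  foldr (fun d L => conc (phi d) L) (@eps_lang S) w.

Definition finite_lang (A : eqType) (L : lang A) : Prop :=
  exists s : seq (seq A), forall w, L w -> w \in s.

From Stdlib Require Import Classical.
From mathcomp Require Import all_boot.

Set Implicit Arguments.
Unset Strict Implicit.
Unset Printing Implicit Defensive.

(* Since every letter can be substituted by the empty word, a nonempty word of
   phi(x) witnesses a nonempty word of some phi(d) with d in x, and then any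
   shortest nonempty word of phi(d) lies in phi(x) as well. Hence every word of
   S(phi(x)) is no longer than the largest of the finitely many lengths
   min { |v| : v in phi(d), v nonempty }, d in D. *)

Lemma uniform_witness_bound (T : finType) (P : T -> nat -> Prop) :
  exists B, forall t n, P t n -> exists2 m, P t m & m <= B.
Proof.
suff [B HB] : exists B, forall t, t \in enum T -> forall n, P t n ->
    exists2 m, P t m & m <= B.
  by exists B => t; apply: HB; rewrite mem_enum.
elim: (enum T) => [|t l [B IH]]; first by exists 0.
have [[m Pm]|noP] := classic (exists m, P t m).
  exists (maxn B m) => t'; rewrite in_cons => /predU1P [->|t'l] n Pn.
    by exists m; rewrite ?leq_maxr.
  by have [m' Pm' le_m'B] := IH t' t'l n Pn; exists m'; rewrite ?leq_max ?le_m'B.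
exists B => t'; rewrite in_cons => /predU1P [->|t'l] n Pn.
  by case: noP; exists n.
exact: IH t'l n Pn.
Qed.

Lemma finite_lang_size_le (A : finType) (B : nat) :
  finite_lang (fun w : seq A => size w <= B).
Proof.
elim: B => [|B [s Hs]]; first by exists [:: [::]] => -[].
exists ([::] :: [seq a :: w | a <- enum A, w <- s]) => -[|a w] //= le_wB.
by rewrite in_cons; apply/predU1P; right; apply/allpairsP; exists (a, w);
  rewrite mem_enum Hs.
Qed.

Lemma Smin_size_le (A : Type) (L : lang A) w v :
  Smin L w -> L v -> v <> [::] -> size w <= size v.
Proof. by move=> [_ [_ minw]] Lv v_nil; rewrite leqNgt; apply/negP/minw. Qed.

Section SubstWord.
Variables (D : eqType) (S : Type) (phi : D -> lang S).

Lemma subst_word_nonempty x w : subst_word phi x w -> w <> [::] ->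
  exists2 d, d \in x & exists2 u, phi d u & u <> [::].
Proof.
elim: x w => [|d x IH] w /=; first by move=> ->.
move=> [[|a u] [v [-> [phi_u xv]]]] w_nil.
  by have [d' d'x nonempty_d'] := IH v xv w_nil; exists d'; rewrite ?inE ?d'x ?orbT.
by exists d; rewrite ?inE ?eqxx //; exists (a :: u).
Qed.

Hypothesis phi_nil : forall d, phi d [::].

Lemma subst_word_nil x : subst_word phi x [::].
Proof. by elim: x => [|d x IH] //=; exists [::], [::]. Qed.

Lemma subst_word_mem x d u : d \in x -> phi d u -> subst_word phi x u.
Proof.
elim: x => [|d' x IH] //=; rewrite in_cons => /predU1P [<-|dx] phi_u.
  by exists u, [::]; rewrite cats0; split; last split; last exact: subst_word_nil.
by exists [::], u; split; last split; [|exact: phi_nil|exact: IH].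
Qed.

End SubstWord.

Theorem corollary1 (D S : finType) (K : lang D) (phi : D -> lang S) :
  regular K ->
  (forall w, K w -> w <> [::]) ->
  (forall d, regular (phi d)) ->
  (forall d, phi d [::]) ->
  finite_lang (fun w : seq S => exists x, K x /\ Smin (subst_word phi x) w).
Proof.
move=> _ _ _ phi_nil.
have [B HB] := uniform_witness_bound
  (fun d n => exists2 v, phi d v & v <> [::] /\ size v = n).
have [s Hs] := finite_lang_size_le S B.
exists s => w [x [_ Sw]]; apply: Hs.
have [phix_w [w_nil _]] := Sw.
have [d dx [u phi_u u_nil]] := subst_word_nonempty phix_w w_nil.
have [_ [v phi_v [v_nil <-]] le_vB] := HB d (size u) (ex_intro2 _ _ u phi_u (conj u_nil erefl)).
apply: leq_trans le_vB.
exact: Smin_size_le Sw (subst_word_mem phi_nil dx phi_v) v_nil.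
Qed.
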